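(* For every $\epsilon>0$ there exists a trigonometric polynomial $f$ on $\mathbb T^2$ such that $$\|P_xP_yf\|_1+\|(I-P_xP_y)f\|_1\le\epsilon\,|||f|||.$$
   Context: $\mathbb T=\mathbb R/2\pi\mathbb Z$ carries normalized Lebesgue measure, and points of $\mathbb T^2$ are written $(x,y)$. For $f\in L^2(\mathbb T^2)$ with Fourier coefficients $\hat f(m,n)$: - $P_x$ is the orthogonal projection onto $H^2_x=\{\hat f(m,n)=0 \text{ for } m<0\}$, and $P_{-x}=I-P_x$; - $P_y$ is the orthogonal projection onto $H^2_y=\{\hat f(m,n)=0 \text{ for } n<0\}$, and $P_{-y}=I-P_y$. For a trigonometric polynomial $f$ on $\mathbb T^2$ set $$|||f|||_{(x)}=\|P_xf\|_1+\|P_{-x}P_yf\|_1+\|P_{-x}P_{-y}f\|_1,\qquad |||f|||_{(y)}=\|P_yf\|_1+\|P_{-y}P_xf\|_1+\|P_{-y}P_{-x}f\|_1,$$ and $$|||f|||=\inf\{|||g|||_{(x)}+|||h|||_{(y)}: f=g+h,\ g,h \text{ trigonometric polynomials}\}.$$ *)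

From Stdlib Require Import Reals ZArith List.
From Coquelicot Require Import Coquelicot.
Open Scope R_scope.

(* A trigonometric polynomial on T^2 is given by a finite list of terms
   ((m,n), c) standing for c * e^{i(m x + n y)}; its Fourier coefficient at
   (m,n) is the sum of the c's attached to (m,n). *)
Definition trigpoly := list ((Z * Z) * C).

Definition tp_eval (p : trigpoly) (x y : R) : C :=
  fold_right (fun t acc =>
      let '((m, n), c) := t in
      Cplus (Cmult c (cos (IZR m * x + IZR n * y), sin (IZR m * x + IZR n * y))) acc)
    (RtoC 0) p.

(* L^1 norm w.r.t. normalized Lebesgue measure on T^2 = [0,2pi)^2
   (integrand is continuous, so the iterated Riemann integral is the Lebesgue one). *)
Definition L1norm (p : trigpoly) : R :=
  RInt (fun x => RInt (fun y => Cmod (tp_eval p x y)) 0 (2 * PI)) 0 (2 * PI)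
  / (4 * PI ^ 2).

Definition Px  (p : trigpoly) : trigpoly := filter (fun t => Z.leb 0 (fst (fst t))) p.
Definition Pmx (p : trigpoly) : trigpoly := filter (fun t => Z.ltb (fst (fst t)) 0) p.
Definition Py  (p : trigpoly) : trigpoly := filter (fun t => Z.leb 0 (snd (fst t))) p.
Definition Pmy (p : trigpoly) : trigpoly := filter (fun t => Z.ltb (snd (fst t)) 0) p.
Definition I_minus_PxPy (p : trigpoly) : trigpoly :=
  filter (fun t => negb (Z.leb 0 (fst (fst t)) && Z.leb 0 (snd (fst t)))) p.

Definition triple_x (f : trigpoly) : R :=
  L1norm (Px f) + L1norm (Pmx (Py f)) + L1norm (Pmx (Pmy f)).
Definition triple_y (f : trigpoly) : R :=
  L1norm (Py f) + L1norm (Pmy (Px f)) + L1norm (Pmy (Pmx f)).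

Definition triple (f : trigpoly) : Rbar :=
  Glb_Rbar (fun r => exists g h : trigpoly,
      (forall x y, tp_eval f x y = Cplus (tp_eval g x y) (tp_eval h x y)) /\
      r = triple_x g + triple_y h).

(* The example is f = |D_n|^2 with D_n = sum_{j<n} e^{ij(x-y)}.  It is nonnegative with
   mean n, and its only Fourier coefficient in the first quadrant is the constant term n,
   so ||P_x P_y f||_1 = n and ||(I - P_x P_y) f||_1 <= 2n.

   For the lower bound, pair with w = sum_{k=1}^n e^{ik(x-y)}/k.  The function
   psi = w - conj w = 2i sum_{k=1}^n sin (k(x-y))/k is bounded by 14 uniformly in n, and
   P_x psi = P_{-y} psi = w.  Hence for every splitting f = g + h,
   Re<g, w> = Re<P_x g, psi> <= 14 |||g|||_(x) and Re<h, w> = Re<P_{-y} P_x h, psi>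
   <= 14 |||h|||_(y), so |||f||| >= Re<f, w> / 14 = (1/14) sum_{k<n} (n-k-1)/(k+1),
   which grows like n log n.  Taking n = 2^(p+1) with p large gives the ratio eps. *)

From Stdlib Require Import Reals ZArith List Lra Lia.
From Coquelicot Require Import Coquelicot.
Open Scope R_scope.

Definition lsum {A} (f : A -> R) (l : list A) : R :=
  fold_right (fun a acc => f a + acc) 0 l.

Lemma lsum_app {A} (f : A -> R) l1 l2 : lsum f (l1 ++ l2) = lsum f l1 + lsum f l2.
Proof. induction l1 as [|a l1 IH]; simpl; [lra | rewrite IH; lra]. Qed.

Lemma lsum_ext {A} (f g : A -> R) l :
  (forall a, In a l -> f a = g a) -> lsum f l = lsum g l.
Proof.
  induction l as [|a l IH]; simpl; intros H; auto.
  rewrite H, IH; auto.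
Qed.

Lemma lsum_scal {A} (f : A -> R) c l : lsum (fun a => c * f a) l = c * lsum f l.
Proof. induction l as [|a l IH]; simpl; [lra | rewrite IH; lra]. Qed.

Lemma lsum_map {A B} (f : B -> R) (g : A -> B) l :
  lsum f (map g l) = lsum (fun a => f (g a)) l.
Proof. induction l as [|a l IH]; simpl; auto. rewrite IH; reflexivity. Qed.

Lemma lsum_flat_map {A B} (f : B -> R) (g : A -> list B) l :
  lsum f (flat_map g l) = lsum (fun a => lsum f (g a)) l.
Proof. induction l as [|a l IH]; simpl; auto. rewrite lsum_app, IH; reflexivity. Qed.

Lemma lsum_filter {A} (f : A -> R) (P : A -> bool) l :
  lsum f (filter P l) = lsum (fun a => if P a then f a else 0) l.
Proof. induction l as [|a l IH]; simpl; auto. destruct (P a); simpl; rewrite IH; lra. Qed.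

Fixpoint sumn (f : nat -> R) (n : nat) : R :=
  match n with O => 0 | S n' => f n' + sumn f n' end.

Lemma sumn_ext f g n : (forall i, (i < n)%nat -> f i = g i) -> sumn f n = sumn g n.
Proof. induction n as [|n IH]; simpl; intros H; auto. rewrite H, IH; auto. Qed.

Lemma sumn_le f g n : (forall i, (i < n)%nat -> f i <= g i) -> sumn f n <= sumn g n.
Proof.
  induction n as [|n IH]; simpl; intros H; [lra |].
  pose proof (H n ltac:(lia)). pose proof (IH (fun i Hi => H i ltac:(lia))). lra.
Qed.

Lemma sumn_scal f c n : sumn (fun i => c * f i) n = c * sumn f n.
Proof. induction n as [|n IH]; simpl; [lra | rewrite IH; lra]. Qed.

Lemma sumn_const c n : sumn (fun _ => c) n = INR n * c.
Proof. induction n as [|n IH]; simpl sumn; [simpl; lra | rewrite IH, S_INR; lra]. Qed.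

Lemma sumn_nonneg f n : (forall i, (i < n)%nat -> 0 <= f i) -> 0 <= sumn f n.
Proof. intros H. rewrite <- (Rmult_0_r (INR n)), <- sumn_const. apply sumn_le; auto. Qed.

Lemma sumn_abs f n : Rabs (sumn f n) <= sumn (fun i => Rabs (f i)) n.
Proof.
  induction n as [|n IH]; simpl; [rewrite Rabs_R0; lra |].
  eapply Rle_trans; [apply Rabs_triang | lra].
Qed.

Lemma sumn_split f a b : sumn f (a + b) = sumn f a + sumn (fun i => f (a + i)%nat) b.
Proof.
  induction b as [|b IH]; simpl; [rewrite Nat.add_0_r; lra |].
  rewrite Nat.add_succ_r; simpl. rewrite IH; lra.
Qed.

Lemma sumn_swap (f : nat -> nat -> R) n m :
  sumn (fun i => sumn (fun j => f i j) m) n = sumn (fun j => sumn (fun i => f i j) n) m.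
Proof.
  induction n as [|n IH]; simpl.
  - induction m as [|m IHm]; simpl; lra.
  - rewrite IH. clear IH. induction m as [|m IHm]; simpl; [lra | rewrite <- IHm; lra].
Qed.

Lemma sumn_indicator_eq j c v n :
  sumn (fun l => if Nat.eqb j (l + c) then v else 0) n
  = if (Nat.leb c j && Nat.ltb (j - c) n)%bool then v else 0.
Proof.
  induction n as [|n IH]; simpl sumn.
  - destruct (Nat.leb c j), (Nat.ltb_spec (j - c) 0); simpl; try lia; lra.
  - rewrite IH.
    destruct (Nat.eqb_spec j (n + c)), (Nat.leb_spec c j), (Nat.ltb_spec (j - c) n),
      (Nat.ltb_spec (j - c) (S n)); simpl; try lia; lra.
Qed.

Lemma sumn_indicator_le c v n : sumn (fun j => if Nat.leb c j then v else 0) n = INR (n - c) * v.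
Proof.
  induction n as [|n IH]; simpl sumn; [simpl; lra |]. rewrite IH.
  destruct (Nat.leb_spec c n).
  - replace (S n - c)%nat with (S (n - c)) by lia. rewrite S_INR. lra.
  - replace (S n - c)%nat with 0%nat by lia. replace (n - c)%nat with 0%nat by lia. simpl; lra.
Qed.

(** * Trigonometric polynomials and the Fourier pairing *)

Definition cis (u : R) : C := (cos u, sin u).

Definition tp_term (t : (Z * Z) * C) (x y : R) : C :=
  let '((m, n), c) := t in Cmult c (cis (IZR m * x + IZR n * y)).

Lemma tp_eval_nil x y : tp_eval nil x y = 0%C.
Proof. reflexivity. Qed.

Lemma tp_eval_cons t p x y : tp_eval (t :: p) x y = Cplus (tp_term t x y) (tp_eval p x y).
Proof. destruct t as [[m n] c]; reflexivity. Qed.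

Lemma tp_eval_app p q x y : tp_eval (p ++ q) x y = Cplus (tp_eval p x y) (tp_eval q x y).
Proof.
  induction p as [|t p IH]; simpl app.
  - rewrite tp_eval_nil. ring.
  - rewrite !tp_eval_cons, IH. ring.
Qed.

Lemma tp_eval_filter_compl (P : (Z * Z) * C -> bool) p x y :
  tp_eval p x y
  = Cplus (tp_eval (filter P p) x y) (tp_eval (filter (fun t => negb (P t)) p) x y).
Proof.
  induction p as [|t p IH]; simpl filter; [rewrite tp_eval_nil; ring |].
  destruct (P t); simpl negb; rewrite !tp_eval_cons, IH; ring.
Qed.

Lemma filter_filter {A} (P Q : A -> bool) l :
  filter P (filter Q l) = filter (fun a => Q a && P a)%bool l.
Proof. induction l as [|a l IH]; simpl; auto. destruct (Q a); simpl; rewrite ?IH; auto. Qed.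

Lemma cis_sub a b : cis (a - b) = Cmult (cis a) (Cconj (cis b)).
Proof.
  unfold cis, Cmult, Cconj; simpl.
  rewrite cos_minus, sin_minus. apply injective_projections; simpl; ring.
Qed.

Definition term_mul_conj (t s : (Z * Z) * C) : (Z * Z) * C :=
  ((fst (fst t) - fst (fst s), snd (fst t) - snd (fst s))%Z, Cmult (snd t) (Cconj (snd s))).

Definition tp_mul_conj (p q : trigpoly) : trigpoly :=
  flat_map (fun t => map (term_mul_conj t) q) p.

Lemma tp_term_mul_conj t s x y :
  tp_term (term_mul_conj t s) x y = Cmult (tp_term t x y) (Cconj (tp_term s x y)).
Proof.
  destruct t as [[m n] c], s as [[m' n'] d]; simpl.
  rewrite !minus_IZR.
  replace ((IZR m - IZR m') * x + (IZR n - IZR n') * y)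
    with ((IZR m * x + IZR n * y) - (IZR m' * x + IZR n' * y)) by ring.
  rewrite cis_sub, Cmult_conj. ring.
Qed.

Lemma tp_eval_map_term_mul_conj t q x y :
  tp_eval (map (term_mul_conj t) q) x y = Cmult (tp_term t x y) (Cconj (tp_eval q x y)).
Proof.
  induction q as [|s q IH]; simpl map.
  - rewrite tp_eval_nil. unfold Cconj; simpl. apply injective_projections; simpl; ring.
  - rewrite !tp_eval_cons, tp_term_mul_conj, IH, Cplus_conj. ring.
Qed.

Lemma tp_eval_mul_conj p q x y :
  tp_eval (tp_mul_conj p q) x y = Cmult (tp_eval p x y) (Cconj (tp_eval q x y)).
Proof.
  induction p as [|t p IH]; unfold tp_mul_conj in *; simpl flat_map;
    [rewrite !tp_eval_nil; ring |].
  rewrite tp_eval_app, tp_eval_cons, IH, tp_eval_map_term_mul_conj. ring.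
Qed.

Lemma lsum_mul_conj (f : (Z * Z) * C -> R) p q :
  lsum f (tp_mul_conj p q) = lsum (fun t => lsum (fun s => f (term_mul_conj t s)) q) p.
Proof. unfold tp_mul_conj. rewrite lsum_flat_map. apply lsum_ext; intros; apply lsum_map. Qed.

Definition term_mean (t : (Z * Z) * C) : R :=
  let '((m, n), c) := t in if (Z.eqb m 0 && Z.eqb n 0)%bool then fst c else 0.

Definition tp_mean (p : trigpoly) : R := lsum term_mean p.

Definition pairing (p q : trigpoly) : R := tp_mean (tp_mul_conj p q).

Lemma pairing_spec p q :
  pairing p q = lsum (fun t => lsum (fun s => term_mean (term_mul_conj t s)) q) p.
Proof. apply lsum_mul_conj. Qed.

Lemma pairing_app p1 p2 q : pairing (p1 ++ p2) q = pairing p1 q + pairing p2 q.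
Proof. rewrite !pairing_spec. apply lsum_app. Qed.

Lemma term_mean_mul_conj_freq_neq t s :
  fst t <> fst s -> term_mean (term_mul_conj t s) = 0.
Proof.
  destruct t as [[m n] c], s as [[m' n'] d]; simpl; intros H.
  destruct (Z.eqb_spec (m - m') 0), (Z.eqb_spec (n - n') 0); simpl; auto.
  exfalso; apply H; f_equal; lia.
Qed.

Lemma pairing_filter_freq (P : Z * Z -> bool) p q :
  pairing (filter (fun t => P (fst t)) p) q = pairing p (filter (fun t => P (fst t)) q).
Proof.
  rewrite !pairing_spec, lsum_filter. apply lsum_ext; intros t _. rewrite lsum_filter.
  transitivity (lsum (fun s => if P (fst t) then term_mean (term_mul_conj t s) else 0) q).
  { destruct (P (fst t)); [reflexivity |]. induction q; simpl; lra. }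
  apply lsum_ext; intros s _.
  destruct t as [[m n] c], s as [[m' n'] d]; simpl fst.
  destruct (Z.eq_dec m m') as [<- | Hm]; [destruct (Z.eq_dec n n') as [<- | Hn] |];
    [reflexivity | |];
    rewrite term_mean_mul_conj_freq_neq by (simpl; congruence);
    destruct (P _), (P _); reflexivity.
Qed.

Lemma pairing_Px p q : pairing (Px p) q = pairing p (Px q).
Proof. exact (pairing_filter_freq (fun k => Z.leb 0 (fst k)) p q). Qed.

Lemma pairing_Pmy p q : pairing (Pmy p) q = pairing p (Pmy q).
Proof. exact (pairing_filter_freq (fun k => Z.ltb (snd k) 0) p q). Qed.

Lemma tp_mean_filter (P : (Z * Z) * C -> bool) p :
  (forall t, In t p -> fst t = (0, 0)%Z -> P t = true) -> tp_mean (filter P p) = tp_mean p.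
Proof.
  intros HP. unfold tp_mean. rewrite lsum_filter. apply lsum_ext; intros t Ht.
  destruct (P t) eqn:E; auto.
  destruct t as [[m n] c]; simpl.
  destruct (Z.eqb_spec m 0), (Z.eqb_spec n 0); simpl; auto.
  subst. rewrite HP in E by auto. discriminate.
Qed.

Lemma cis_period_Z u k : cis (u + 2 * IZR k * PI) = cis u.
Proof.
  unfold cis. destruct (Z_le_gt_dec 0 k).
  - rewrite <- (Z2Nat.id k), <- INR_IZR_INZ by lia. now rewrite sin_period, cos_period.
  - replace u with ((u + 2 * IZR k * PI) + 2 * INR (Z.to_nat (- k)) * PI) at 3 4
      by (rewrite INR_IZR_INZ, Z2Nat.id, opp_IZR by lia; ring).
    now rewrite sin_period, cos_period.
Qed.

Lemma is_RInt_eq_value (f : R -> R) (a b u v : R) : is_RInt f a b u -> u = v -> is_RInt f a b v.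
Proof. intros H <-; exact H. Qed.

Lemma is_RInt_const_R a b v : is_RInt (fun _ => v) a b ((b - a) * v).
Proof. exact (is_RInt_const a b v). Qed.

Lemma is_RInt_scal_R (f : R -> R) (a b k v : R) :
  is_RInt f a b v -> is_RInt (fun x => k * f x) a b (k * v).
Proof. exact (is_RInt_scal f a b k v). Qed.

Lemma is_RInt_re_cis_affine (c : C) (A : R) (N : Z) :
  is_RInt (fun y => fst (Cmult c (cis (A + IZR N * y)))) 0 (2 * PI)
    (if Z.eqb N 0 then 2 * PI * fst (Cmult c (cis A)) else 0).
Proof.
  destruct (Z.eqb_spec N 0) as [-> | HN].
  - apply is_RInt_ext with (fun _ => fst (Cmult c (cis A))).
    { intros y _. now rewrite Rmult_0_l, Rplus_0_r. }
    eapply is_RInt_eq_value; [apply is_RInt_const_R | ring].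
  - assert (HN' : IZR N <> 0) by (apply not_0_IZR; exact HN).
    destruct c as [a b]. unfold cis, Cmult; cbn [fst snd].
    set (F y := (a * sin (A + IZR N * y) + b * cos (A + IZR N * y)) / IZR N).
    eapply is_RInt_eq_value; [apply (is_RInt_derive F) |].
    + intros y _. unfold F. auto_derive; auto. field; auto.
    + intros y _. apply (@ex_derive_continuous R_AbsRing R_NormedModule). auto_derive; auto.
    + pose proof (cis_period_Z A N) as E. unfold cis in E. injection E as Ec Es.
      unfold F, minus, plus, opp; simpl.
      replace (A + IZR N * (2 * PI)) with (A + 2 * IZR N * PI) by ring.
      rewrite Ec, Es, Rmult_0_r, Rplus_0_r. field; auto.
Qed.

Lemma is_RInt2_re_term t :
  (forall x, ex_RInt (fun y => fst (tp_term t x y)) 0 (2 * PI)) /\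
  is_RInt (fun x => RInt (fun y => fst (tp_term t x y)) 0 (2 * PI)) 0 (2 * PI)
    (4 * PI ^ 2 * term_mean t).
Proof.
  destruct t as [[m n] c]; simpl tp_term.
  assert (Hy : forall x, is_RInt (fun y => fst (Cmult c (cis (IZR m * x + IZR n * y)))) 0 (2 * PI)
                 (if Z.eqb n 0 then 2 * PI * fst (Cmult c (cis (0 + IZR m * x))) else 0)).
  { intros x. rewrite Rplus_0_l. apply is_RInt_re_cis_affine. }
  split; [intros x; eexists; apply Hy |].
  apply is_RInt_ext
    with (fun x => if Z.eqb n 0 then 2 * PI * fst (Cmult c (cis (0 + IZR m * x))) else 0).
  { intros x _. symmetry. apply is_RInt_unique, Hy. }
  unfold term_mean. destruct (Z.eqb n 0).
  - eapply is_RInt_eq_value; [apply is_RInt_scal_R, is_RInt_re_cis_affine |].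
    rewrite Bool.andb_true_r. unfold cis; rewrite cos_0, sin_0.
    destruct (Z.eqb m 0); destruct c; simpl; ring.
  - rewrite Bool.andb_false_r.
    eapply is_RInt_eq_value; [apply is_RInt_const_R | ring].
Qed.

Lemma re_tp_eval p x y : fst (tp_eval p x y) = lsum (fun t => fst (tp_term t x y)) p.
Proof.
  induction p as [|t p IH]; [reflexivity |].
  rewrite tp_eval_cons. simpl. now rewrite IH.
Qed.

Lemma is_RInt_lsum {A} (F : A -> R -> R) (v : A -> R) l a b :
  (forall t, In t l -> is_RInt (F t) a b (v t)) ->
  is_RInt (fun y => lsum (fun t => F t y) l) a b (lsum v l).
Proof.
  induction l as [|t l IH]; intros H; simpl.
  - eapply is_RInt_eq_value; [apply is_RInt_const_R | ring].
  - apply (is_RInt_plus (F t) (fun y => lsum (fun t => F t y) l)).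
    + apply H; simpl; auto.
    + apply IH. intros; apply H; simpl; auto.
Qed.

Definition ex_RInt2 (F : R -> R -> R) : Prop :=
  (forall x, ex_RInt (F x) 0 (2 * PI)) /\ ex_RInt (fun x => RInt (F x) 0 (2 * PI)) 0 (2 * PI).

Definition dbl_int (F : R -> R -> R) : R :=
  RInt (fun x => RInt (F x) 0 (2 * PI)) 0 (2 * PI).

Lemma dbl_int_re_tp_eval p :
  ex_RInt2 (fun x y => fst (tp_eval p x y)) /\
  dbl_int (fun x y => fst (tp_eval p x y)) = 4 * PI ^ 2 * tp_mean p.
Proof.
  assert (Hy : forall x, is_RInt (fun y => fst (tp_eval p x y)) 0 (2 * PI)
                 (lsum (fun t => RInt (fun y => fst (tp_term t x y)) 0 (2 * PI)) p)).
  { intros x. apply is_RInt_ext with (fun y => lsum (fun t => fst (tp_term t x y)) p).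
    { intros y _. symmetry. apply re_tp_eval. }
    apply is_RInt_lsum. intros t _.
    apply (RInt_correct (V := R_CompleteNormedModule)), (proj1 (is_RInt2_re_term t)). }
  assert (Hx : is_RInt (fun x => RInt (fun y => fst (tp_eval p x y)) 0 (2 * PI)) 0 (2 * PI)
                 (4 * PI ^ 2 * tp_mean p)).
  { apply is_RInt_ext
      with (fun x => lsum (fun t => RInt (fun y => fst (tp_term t x y)) 0 (2 * PI)) p).
    { intros x _. symmetry. apply is_RInt_unique, Hy. }
    unfold tp_mean. rewrite <- lsum_scal. apply is_RInt_lsum. intros t _; apply (proj2 (is_RInt2_re_term t)). }
  split; [split; [intros x; eexists; apply Hy | eexists; apply Hx] | apply is_RInt_unique, Hx].
Qed.

Lemma Rabs_sin_le u : Rabs (sin u) <= Rabs u.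
Proof.
  pose proof PI2_1. pose proof (SIN_bound u).
  destruct (Rle_or_lt 1 (Rabs u)) as [Hu | Hu].
  { unfold Rabs at 1; destruct (Rcase_abs (sin u)); lra. }
  destruct (Rtotal_order u 0) as [Hn | [-> | Hp]].
  - rewrite Rabs_left in Hu by lra. pose proof (sin_gt_x u Hn).
    pose proof (sin_lt_0_var u ltac:(lra) Hn). rewrite !Rabs_left; lra.
  - rewrite sin_0; lra.
  - rewrite Rabs_right in Hu by lra. pose proof (sin_lt_x u Hp).
    pose proof (sin_gt_0 u Hp ltac:(lra)). rewrite !Rabs_right; lra.
Qed.

Lemma Cmod_cis_sub_le a b : Cmod (Cminus (cis a) (cis b)) <= Rabs (a - b).
Proof.
  unfold Cmod, Cminus, Cplus, Copp, cis; simpl.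
  rewrite <- sqrt_Rsqr_abs. apply sqrt_le_1_alt.
  (* |cis a - cis b|^2 = 2 - 2 cos (a - b) = 4 sin^2 ((a - b) / 2) <= (a - b)^2 *)
  replace ((cos a + - cos b) * ((cos a + - cos b) * 1) + (sin a + - sin b) * ((sin a + - sin b) * 1))
    with (2 - 2 * cos (2 * ((a - b) / 2))).
  2:{ replace (2 * ((a - b) / 2)) with (a - b) by field. rewrite cos_minus.
      pose proof (sin2_cos2 a). pose proof (sin2_cos2 b). unfold Rsqr in *. nra. }
  rewrite cos_2a_sin.
  assert (Rsqr (sin ((a - b) / 2)) <= Rsqr ((a - b) / 2)).
  { rewrite (Rsqr_abs (sin _)), (Rsqr_abs ((a - b) / 2)).
    apply Rsqr_incr_1; [apply Rabs_sin_le | apply Rabs_pos | apply Rabs_pos]. }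
  replace (Rsqr (a - b)) with (4 * Rsqr ((a - b) / 2)) by (unfold Rsqr; field).
  unfold Rsqr in *. lra.
Qed.

Lemma Cmod_sub_ge a b : Rabs (Cmod a - Cmod b) <= Cmod (Cminus a b).
Proof.
  pose proof (Cmod_triangle (Cminus a b) b) as Ha.
  pose proof (Cmod_triangle (Copp (Cminus a b)) a) as Hb.
  replace (Cplus (Cminus a b) b) with a in Ha by ring.
  replace (Cplus (Copp (Cminus a b)) a) with b in Hb by ring.
  rewrite Cmod_opp in Hb. unfold Rabs; destruct (Rcase_abs _); lra.
Qed.

Definition tp_lip_const (p : trigpoly) : R :=
  lsum (fun t => Cmod (snd t) * (Rabs (IZR (fst (fst t))) + Rabs (IZR (snd (fst t))))) p.

Lemma tp_lip_const_nonneg p : 0 <= tp_lip_const p.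
Proof.
  induction p as [|[[m n] c] p IH]; unfold tp_lip_const in *; simpl; [lra |].
  pose proof (Cmod_ge_0 c). pose proof (Rabs_pos (IZR m)). pose proof (Rabs_pos (IZR n)). nra.
Qed.

Lemma tp_eval_lipschitz p x y x' y' :
  Cmod (Cminus (tp_eval p x y) (tp_eval p x' y'))
  <= tp_lip_const p * (Rabs (x - x') + Rabs (y - y')).
Proof.
  induction p as [|[[m n] c] p IH]; unfold tp_lip_const in *.
  - rewrite !tp_eval_nil. replace (Cminus 0 0) with (RtoC 0) by ring. rewrite Cmod_0. simpl; lra.
  - rewrite !tp_eval_cons. simpl tp_term; simpl lsum.
    replace (Cminus (Cplus (Cmult c (cis (IZR m * x + IZR n * y))) (tp_eval p x y))
                    (Cplus (Cmult c (cis (IZR m * x' + IZR n * y'))) (tp_eval p x' y')))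
      with (Cplus (Cmult c (Cminus (cis (IZR m * x + IZR n * y)) (cis (IZR m * x' + IZR n * y'))))
                  (Cminus (tp_eval p x y) (tp_eval p x' y'))) by ring.
    eapply Rle_trans; [apply Cmod_triangle |]. rewrite Cmod_mult.
    pose proof (Cmod_cis_sub_le (IZR m * x + IZR n * y) (IZR m * x' + IZR n * y')) as Hcis.
    replace (IZR m * x + IZR n * y - (IZR m * x' + IZR n * y'))
      with (IZR m * (x - x') + IZR n * (y - y')) in Hcis by ring.
    pose proof (Rabs_triang (IZR m * (x - x')) (IZR n * (y - y'))). rewrite !Rabs_mult in *.
    pose proof (Rabs_pos (IZR m)). pose proof (Rabs_pos (IZR n)).
    pose proof (Rabs_pos (x - x')). pose proof (Rabs_pos (y - y')).
    assert (Hterm : Cmod (Cminus (cis (IZR m * x + IZR n * y)) (cis (IZR m * x' + IZR n * y')))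
                    <= (Rabs (IZR m) + Rabs (IZR n)) * (Rabs (x - x') + Rabs (y - y'))) by nra.
    pose proof (Rmult_le_compat_l _ _ _ (Cmod_ge_0 c) Hterm). lra.
Qed.

Lemma continuous_of_lipschitz (f : R -> R) L x :
  0 <= L -> (forall u v, Rabs (f u - f v) <= L * Rabs (u - v)) -> continuous f x.
Proof.
  intros HL H. apply continuity_pt_filterlim.
  intros eps Heps. exists (eps / (L + 1)). split; [apply Rdiv_lt_0_compat; lra |].
  intros y [_ Hy]. unfold R_dist in *. eapply Rle_lt_trans; [apply H |].
  apply Rle_lt_trans with (L * (eps / (L + 1))); [apply Rmult_le_compat_l; [lra | left; exact Hy] |].
  apply Rlt_le_trans with ((L + 1) * (eps / (L + 1))).
  - apply Rmult_lt_compat_r; [apply Rdiv_lt_0_compat |]; lra.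
  - right; field; lra.
Qed.

Lemma ex_RInt2_of_lipschitz (F : R -> R -> R) L : 0 <= L ->
  (forall x y x' y', Rabs (F x y - F x' y') <= L * (Rabs (x - x') + Rabs (y - y'))) ->
  ex_RInt2 F.
Proof.
  intros HL H. pose proof PI_RGT_0.
  assert (Hy : forall x, ex_RInt (F x) 0 (2 * PI)).
  { intros x. apply (ex_RInt_continuous (V := R_CompleteNormedModule)). intros z _.
    apply (continuous_of_lipschitz _ L); auto. intros u v.
    eapply Rle_trans; [apply H |]. rewrite Rminus_diag, Rabs_R0. lra. }
  split; auto.
  apply (ex_RInt_continuous (V := R_CompleteNormedModule)). intros z _.
  apply (continuous_of_lipschitz _ (2 * PI * L)); [nra |]. intros u v.
  rewrite <- (RInt_minus (V := R_CompleteNormedModule)) by auto.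
  eapply Rle_trans; [apply abs_RInt_le_const; [lra | | ] |].
  - apply (ex_RInt_minus (V := R_NormedModule)); auto.
  - intros t _. eapply Rle_trans; [apply H |]. rewrite Rminus_diag, Rabs_R0, Rplus_0_r.
    apply Rle_refl.
  - right; ring.
Qed.

Lemma ex_RInt2_Cmod_tp_eval p : ex_RInt2 (fun x y => Cmod (tp_eval p x y)).
Proof.
  apply (ex_RInt2_of_lipschitz _ (tp_lip_const p)); [apply tp_lip_const_nonneg |].
  intros. eapply Rle_trans; [apply Cmod_sub_ge | apply tp_eval_lipschitz].
Qed.

Lemma dbl_int_le F G : ex_RInt2 F -> ex_RInt2 G ->
  (forall x y, F x y <= G x y) -> dbl_int F <= dbl_int G.
Proof.
  intros [HF1 HF2] [HG1 HG2] H. pose proof PI_RGT_0. unfold dbl_int.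
  apply RInt_le; auto; [lra |]. intros x _. apply RInt_le; auto. lra.
Qed.

Lemma dbl_int_scal F k : ex_RInt2 F ->
  ex_RInt2 (fun x y => k * F x y) /\ dbl_int (fun x y => k * F x y) = k * dbl_int F.
Proof.
  intros [H1 H2].
  assert (Hin : forall x, RInt (fun y => k * F x y) 0 (2 * PI) = k * RInt (F x) 0 (2 * PI))
    by (intros x; exact (RInt_scal (V := R_CompleteNormedModule) (F x) 0 (2 * PI) k (H1 x))).
  unfold dbl_int, ex_RInt2. rewrite (RInt_ext _ (fun x => k * RInt (F x) 0 (2 * PI)))
    by (intros x _; apply Hin).
  repeat split.
  - intros x. exact (ex_RInt_scal (V := R_NormedModule) (F x) 0 (2 * PI) k (H1 x)).
  - apply (ex_RInt_ext (fun x => k * RInt (F x) 0 (2 * PI))); [intros x _; symmetry; apply Hin |].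
    exact (ex_RInt_scal (V := R_NormedModule) _ 0 (2 * PI) k H2).
  - exact (RInt_scal (V := R_CompleteNormedModule) _ 0 (2 * PI) k H2).
Qed.

Lemma L1norm_dbl_int a : L1norm a = dbl_int (fun x y => Cmod (tp_eval a x y)) / (4 * PI ^ 2).
Proof. reflexivity. Qed.

Lemma tp_mean_dbl_int p : tp_mean p = dbl_int (fun x y => fst (tp_eval p x y)) / (4 * PI ^ 2).
Proof. rewrite (proj2 (dbl_int_re_tp_eval p)). pose proof PI_RGT_0. field. lra. Qed.

Lemma L1norm_le_mean a p :
  (forall x y, Cmod (tp_eval a x y) <= fst (tp_eval p x y)) -> L1norm a <= tp_mean p.
Proof.
  intros H. rewrite L1norm_dbl_int, tp_mean_dbl_int. pose proof PI_RGT_0.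
  apply Rmult_le_compat_r; [left; apply Rinv_0_lt_compat; nra |].
  apply dbl_int_le; [apply ex_RInt2_Cmod_tp_eval | apply dbl_int_re_tp_eval | exact H].
Qed.

Lemma mean_le_L1norm a p k :
  (forall x y, fst (tp_eval p x y) <= k * Cmod (tp_eval a x y)) -> tp_mean p <= k * L1norm a.
Proof.
  intros H. rewrite L1norm_dbl_int, tp_mean_dbl_int.
  destruct (dbl_int_scal _ k (ex_RInt2_Cmod_tp_eval a)) as [Hex Heq].
  unfold Rdiv; rewrite <- Rmult_assoc, <- Heq. pose proof PI_RGT_0.
  apply Rmult_le_compat_r; [left; apply Rinv_0_lt_compat; nra |].
  apply dbl_int_le; [apply dbl_int_re_tp_eval | exact Hex | exact H].
Qed.

Lemma L1norm_nonneg a : 0 <= L1norm a.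
Proof.
  rewrite <- (Rmult_1_l (L1norm a)). apply (mean_le_L1norm a nil).
  intros x y. rewrite tp_eval_nil, Rmult_1_l. apply Cmod_ge_0.
Qed.

Lemma L1norm_eq_mean p :
  (forall x y, snd (tp_eval p x y) = 0 /\ 0 <= fst (tp_eval p x y)) -> L1norm p = tp_mean p.
Proof.
  intros H.
  assert (Hmod : forall x y, Cmod (tp_eval p x y) = fst (tp_eval p x y)).
  { intros x y. destruct (H x y) as [H1 H2]. destruct (tp_eval p x y) as [u v].
    simpl in *. subst v. change (Cmod (RtoC u) = u). rewrite Cmod_R. apply Rabs_right; lra. }
  apply Rle_antisym.
  - apply L1norm_le_mean. intros x y. rewrite Hmod; lra.
  - rewrite <- (Rmult_1_l (L1norm p)). apply mean_le_L1norm. intros x y. rewrite Hmod; lra.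
Qed.

Lemma pairing_le_L1norm a q k :
  (forall x y, Cmod (tp_eval q x y) <= k) -> pairing a q <= k * L1norm a.
Proof.
  intros H. apply mean_le_L1norm. intros x y. rewrite tp_eval_mul_conj.
  eapply Rle_trans; [eapply Rle_trans; [apply Rle_abs | apply re_le_Cmod] |].
  rewrite Cmod_mult, Cmod_conj, Rmult_comm.
  apply Rmult_le_compat_r; [apply Cmod_ge_0 | apply H].
Qed.

Lemma pairing_eval_ext p p' q :
  (forall x y, tp_eval p x y = tp_eval p' x y) -> pairing p q = pairing p' q.
Proof.
  intros H. unfold pairing. rewrite !tp_mean_dbl_int. unfold dbl_int.
  f_equal. apply RInt_ext; intros x _; apply RInt_ext; intros y _.
  now rewrite !tp_eval_mul_conj, H.
Qed.

(** * Boundedness of the partial sums of sum sin (k t) / k *)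

Lemma sumn_telescope c n : sumn (fun k => c k - c (S k)) n = c O - c n.
Proof. induction n as [|n IH]; simpl; [lra | rewrite IH; lra]. Qed.

Lemma abel_summation s c n :
  sumn (fun i => s i * c i) n
  = sumn s n * c n + sumn (fun k => sumn s (S k) * (c k - c (S k))) n.
Proof. induction n as [|n IH]; simpl; [lra | rewrite IH; simpl; ring]. Qed.

Lemma abel_bound s c n M :
  (forall i, c (S i) <= c i) -> (forall i, 0 <= c i) ->
  (forall j, (j <= n)%nat -> Rabs (sumn s j) <= M) ->
  Rabs (sumn (fun i => s i * c i) n) <= M * c O.
Proof.
  intros Hdec Hpos HM. rewrite abel_summation.
  eapply Rle_trans; [apply Rabs_triang |]. rewrite Rabs_mult.
  assert (H1 : Rabs (sumn s n) * Rabs (c n) <= M * c n).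
  { rewrite (Rabs_right (c n)) by (apply Rle_ge, Hpos). apply Rmult_le_compat_r; auto. }
  assert (H2 : Rabs (sumn (fun k => sumn s (S k) * (c k - c (S k))) n) <= M * (c O - c n)).
  { eapply Rle_trans; [apply sumn_abs |]. rewrite <- sumn_telescope, <- sumn_scal.
    apply sumn_le. intros i Hi. pose proof (Hdec i).
    rewrite Rabs_mult, (Rabs_right (c i - c (S i))) by lra.
    apply Rmult_le_compat_r; [lra | apply HM; lia]. }
  lra.
Qed.

Definition sine_sum (n : nat) (t : R) : R := sumn (fun k => sin (INR (S k) * t) / INR (S k)) n.

Lemma sine_sum_le_linear n t : 0 <= t -> Rabs (sine_sum n t) <= INR n * t.
Proof.
  intros Ht. unfold sine_sum. eapply Rle_trans; [apply sumn_abs |].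
  rewrite <- sumn_const. apply sumn_le. intros i _.
  assert (Hi : 0 < INR (S i)) by (apply lt_0_INR; lia).
  unfold Rdiv. rewrite Rabs_mult, Rabs_inv, (Rabs_right (INR (S i))) by lra.
  apply Rmult_le_reg_r with (INR (S i)); [lra |].
  rewrite Rmult_assoc, Rinv_l, Rmult_1_r by lra.
  eapply Rle_trans; [apply Rabs_sin_le |].
  rewrite Rabs_right by nra. rewrite S_INR in *. pose proof (pos_INR i). nra.
Qed.

Lemma sum_sin_arith_telescope a t j :
  2 * sin (t / 2) * sumn (fun i => sin ((a + INR i) * t)) j
  = cos ((a - / 2) * t) - cos ((a + INR j - / 2) * t).
Proof.
  induction j as [|j IH]; simpl sumn.
  - simpl. replace ((a + 0 - / 2) * t) with ((a - / 2) * t) by ring. ring.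
  - rewrite Rmult_plus_distr_l, IH.
    replace ((a + INR (S j) - / 2) * t) with ((a + INR j) * t + t / 2) by (rewrite S_INR; field).
    replace ((a + INR j - / 2) * t) with ((a + INR j) * t - t / 2) by field.
    rewrite cos_plus, cos_minus. ring.
Qed.

Lemma sin_half_ge t : 0 < t <= PI -> t / 6 <= sin (t / 2).
Proof.
  intros [H1 H2]. pose proof PI_4. pose proof PI2_1.
  destruct (sin_bound (t / 2) 0) as [Hl _]; [lra | lra |].
  eapply Rle_trans; [| exact Hl]. unfold sin_approx, sin_term. simpl.
  assert (t / 2 <= 2) by lra. nra.
Qed.

Lemma sum_sin_arith_bound a t j : 0 < t <= PI ->
  Rabs (sumn (fun i => sin ((a + INR i) * t)) j) <= / sin (t / 2).
Proof.
  intros Ht. pose proof (sin_half_ge t Ht). assert (Hs : 0 < sin (t / 2)) by lra.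
  apply Rmult_le_reg_l with (2 * sin (t / 2)); [lra |].
  rewrite <- (Rabs_right (2 * sin (t / 2))) at 1 by lra.
  rewrite <- Rabs_mult, sum_sin_arith_telescope.
  replace (2 * sin (t / 2) * / sin (t / 2)) with 2 by (field; lra).
  pose proof (COS_bound ((a - / 2) * t)). pose proof (COS_bound ((a + INR j - / 2) * t)).
  unfold Rabs; destruct (Rcase_abs _); lra.
Qed.

(* Split at K ~ 1/t: the head is at most K t <= 1, the tail is handled by Abel summation. *)
Lemma sine_sum_bound_pos n t : 0 < t <= PI -> Rabs (sine_sum n t) <= 7.
Proof.
  intros Ht. pose proof PI_4.
  destruct (archimed (/ t)) as [Hz1 Hz2]. set (z := up (/ t)) in Hz1, Hz2.
  assert (Ht' : 0 < / t) by (apply Rinv_0_lt_compat; lra).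
  assert (Hz0 : (0 < z)%Z) by (apply lt_0_IZR; lra).
  set (K := (Z.to_nat z - 1)%nat).
  assert (HK : INR K + 1 = IZR z).
  { unfold K. rewrite minus_INR by lia. rewrite INR_IZR_INZ, Z2Nat.id by lia. simpl; lra. }
  assert (HKt : INR K * t <= 1).
  { assert (HKle : INR K <= / t) by lra.
    apply Rmult_le_compat_r with (r := t) in HKle; [| lra].
    rewrite Rinv_l in HKle by lra. lra. }
  assert (HK1t : / INR (S K) < t).
  { rewrite S_INR, HK, <- (Rinv_inv t). apply Rinv_lt_contravar; nra. }
  destruct (Nat.le_gt_cases n K) as [Hn | Hn].
  { eapply Rle_trans; [apply sine_sum_le_linear; lra |]. pose proof (le_INR _ _ Hn). nra. }
  replace n with (K + (n - K))%nat by lia. unfold sine_sum. rewrite sumn_split. fold (sine_sum K t).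
  eapply Rle_trans; [apply Rabs_triang |].
  assert (Hhead : Rabs (sine_sum K t) <= 1).
  { eapply Rle_trans; [apply sine_sum_le_linear |]; lra. }
  assert (Htail : Rabs (sumn (fun i => sin (INR (S (K + i)) * t) / INR (S (K + i))) (n - K)) <= 6).
  { rewrite (sumn_ext _ (fun i => sin ((INR (S K) + INR i) * t) * / INR (S (K + i)))).
    2:{ intros i _. unfold Rdiv. rewrite <- plus_INR. reflexivity. }
    pose proof (sin_half_ge t Ht). assert (Hs : 0 < sin (t / 2)) by lra.
    eapply Rle_trans.
    { apply (abel_bound (fun i => sin ((INR (S K) + INR i) * t))
                        (fun i => / INR (S (K + i))) _ (/ sin (t / 2))).
      - intros i. apply Rinv_le_contravar; [apply lt_0_INR; lia | apply le_INR; lia].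
      - intros i. left. apply Rinv_0_lt_compat, lt_0_INR; lia.
      - intros j _. apply sum_sin_arith_bound; auto. }
    rewrite Nat.add_0_r.
    apply Rle_trans with (/ sin (t / 2) * t).
    { apply Rmult_le_compat_l; [left; apply Rinv_0_lt_compat |]; lra. }
    apply Rle_trans with (/ (t / 6) * t); [| right; field; lra].
    apply Rmult_le_compat_r; [lra |]. apply Rinv_le_contravar; lra. }
  lra.
Qed.

Lemma sine_sum_opp n t : sine_sum n (- t) = - sine_sum n t.
Proof.
  unfold sine_sum. rewrite (sumn_ext _ (fun k => -1 * (sin (INR (S k) * t) / INR (S k)))).
  - rewrite sumn_scal; ring.
  - intros i _. replace (INR (S i) * - t) with (- (INR (S i) * t)) by ring.
    rewrite sin_neg. unfold Rdiv; ring.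
Qed.

Lemma sine_sum_period n t k : sine_sum n (t + 2 * IZR k * PI) = sine_sum n t.
Proof.
  unfold sine_sum. apply sumn_ext. intros i _.
  replace (INR (S i) * (t + 2 * IZR k * PI))
    with (INR (S i) * t + 2 * IZR (Z.of_nat (S i) * k) * PI)
    by (rewrite mult_IZR, <- INR_IZR_INZ; ring).
  pose proof (f_equal snd (cis_period_Z (INR (S i) * t) (Z.of_nat (S i) * k))) as Es.
  unfold cis in Es; cbn [snd] in Es. now rewrite Es.
Qed.

Lemma sine_sum_bound n t : Rabs (sine_sum n t) <= 7.
Proof.
  pose proof PI_RGT_0.
  destruct (archimed ((t + PI) / (2 * PI))) as [H1 H2].
  set (k := (up ((t + PI) / (2 * PI)) - 1)%Z).
  assert (Hk : IZR k <= (t + PI) / (2 * PI) < IZR k + 1)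
    by (unfold k; rewrite minus_IZR; simpl; lra).
  set (t' := t - 2 * IZR k * PI).
  assert (Ht' : - PI <= t' < PI).
  { unfold t'. destruct Hk as [Hk1 Hk2].
    apply Rmult_le_compat_r with (r := 2 * PI) in Hk1; [| lra].
    apply Rmult_lt_compat_r with (r := 2 * PI) in Hk2; [| lra].
    unfold Rdiv in *. rewrite Rmult_assoc, Rinv_l in Hk1, Hk2 by lra. lra. }
  replace t with (t' + 2 * IZR k * PI) by (unfold t'; ring). rewrite sine_sum_period.
  destruct (Rtotal_order t' 0) as [Hn | [H0 | Hp]].
  - replace t' with (- - t') by ring. rewrite sine_sum_opp, Rabs_Ropp.
    apply sine_sum_bound_pos; lra.
  - rewrite H0. unfold sine_sum. rewrite (sumn_ext _ (fun _ => 0)), sumn_const, Rabs_right; [lra.. |].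
    intros i _. rewrite Rmult_0_r, sin_0. unfold Rdiv; ring.
  - apply sine_sum_bound_pos; lra.
Qed.

(** * Harmonic numbers *)

Definition harmonic (m : nat) : R := sumn (fun k => / INR (S k)) m.

Lemma harmonic_double m : (1 <= m)%nat -> harmonic m + / 2 <= harmonic (m + m).
Proof.
  intros Hm. unfold harmonic. rewrite sumn_split.
  assert (Hm' : 0 < INR m) by (apply lt_0_INR; lia).
  assert (H : INR m * / INR (m + m) <= sumn (fun i => / INR (S (m + i))) m).
  { rewrite <- sumn_const. apply sumn_le. intros i Hi.
    apply Rinv_le_contravar; [apply lt_0_INR; lia | apply le_INR; lia]. }
  rewrite plus_INR in H. replace (INR m * / (INR m + INR m)) with (/ 2) in H by (field; lra).
  lra.
Qed.

Lemma harmonic_pow2 p : INR p / 2 <= harmonic (2 ^ p).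
Proof.
  induction p as [|p IH]; [unfold harmonic; simpl; lra |].
  rewrite S_INR. replace (2 ^ S p)%nat with (2 ^ p + 2 ^ p)%nat by (simpl; lia).
  pose proof (harmonic_double (2 ^ p) ltac:(pose proof (Nat.pow_nonzero 2 p); lia)). lra.
Qed.

Definition diag_term (j : nat) : (Z * Z) * C := ((Z.of_nat j, - Z.of_nat j)%Z, RtoC 1).

Fixpoint diag_dirichlet (n : nat) : trigpoly :=
  match n with O => nil | S n' => diag_term n' :: diag_dirichlet n' end.

Definition diag_fejer (n : nat) : trigpoly := tp_mul_conj (diag_dirichlet n) (diag_dirichlet n).

Definition diag_harmonic_term (k : nat) : (Z * Z) * C :=
  ((Z.of_nat (S k), - Z.of_nat (S k))%Z, RtoC (/ INR (S k))).

Definition diag_coharmonic_term (k : nat) : (Z * Z) * C :=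
  ((- Z.of_nat (S k), Z.of_nat (S k))%Z, RtoC (- / INR (S k))).

Fixpoint diag_harmonic (n : nat) : trigpoly :=
  match n with O => nil | S n' => diag_harmonic_term n' :: diag_harmonic n' end.

Fixpoint diag_sine (n : nat) : trigpoly :=
  match n with
  | O => nil
  | S n' => diag_harmonic_term n' :: diag_coharmonic_term n' :: diag_sine n'
  end.

Lemma lsum_diag_dirichlet (f : (Z * Z) * C -> R) n :
  lsum f (diag_dirichlet n) = sumn (fun j => f (diag_term j)) n.
Proof. induction n as [|n IH]; simpl; auto. now rewrite IH. Qed.

Lemma lsum_diag_harmonic (f : (Z * Z) * C -> R) n :
  lsum f (diag_harmonic n) = sumn (fun k => f (diag_harmonic_term k)) n.
Proof. induction n as [|n IH]; simpl; auto. now rewrite IH. Qed.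

Lemma Px_diag_harmonic n : Px (diag_harmonic n) = diag_harmonic n.
Proof. induction n as [|n IH]; auto. unfold Px in *. simpl. now rewrite IH. Qed.

Lemma Px_diag_sine n : Px (diag_sine n) = diag_harmonic n.
Proof. induction n as [|n IH]; auto. unfold Px in *. simpl. now rewrite IH. Qed.

Lemma Pmy_diag_sine n : Pmy (diag_sine n) = diag_harmonic n.
Proof. induction n as [|n IH]; auto. unfold Pmy in *. simpl. now rewrite IH. Qed.

Lemma tp_eval_diag_sine n x y : tp_eval (diag_sine n) x y = (0, 2 * sine_sum n (x - y)).
Proof.
  induction n as [|n IH]; [unfold sine_sum; simpl; apply injective_projections; simpl; ring |].
  simpl diag_sine. rewrite !tp_eval_cons, IH.
  unfold diag_harmonic_term, diag_coharmonic_term, tp_term, cis.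
  rewrite opp_IZR, <- INR_IZR_INZ.
  replace (INR (S n) * x + - INR (S n) * y) with (INR (S n) * (x - y)) by ring.
  replace (- INR (S n) * x + INR (S n) * y) with (- (INR (S n) * (x - y))) by ring.
  rewrite cos_neg, sin_neg.
  change (sine_sum (S n) (x - y))
    with (sin (INR (S n) * (x - y)) / INR (S n) + sine_sum n (x - y)).
  assert (INR (S n) <> 0) by (apply not_0_INR; lia).
  unfold Cplus, Cmult, RtoC; apply injective_projections; cbn [fst snd]; field; auto.
Qed.

Lemma Cmod_diag_sine_le n x y : Cmod (tp_eval (diag_sine n) x y) <= 14.
Proof.
  rewrite tp_eval_diag_sine. unfold Cmod; cbn [fst snd].
  replace (0 ^ 2 + (2 * sine_sum n (x - y)) ^ 2) with (Rsqr (2 * sine_sum n (x - y)))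
    by (unfold Rsqr; ring).
  rewrite sqrt_Rsqr_abs, Rabs_mult, Rabs_right by lra.
  pose proof (sine_sum_bound n (x - y)). lra.
Qed.

Lemma pairing_le_triple_x g n : pairing g (diag_harmonic n) <= 14 * triple_x g.
Proof.
  unfold triple_x. pose proof (L1norm_nonneg (Pmx (Py g))). pose proof (L1norm_nonneg (Pmx (Pmy g))).
  rewrite <- Px_diag_sine, <- pairing_Px.
  pose proof (pairing_le_L1norm (Px g) (diag_sine n) 14 (Cmod_diag_sine_le n)). lra.
Qed.

Lemma pairing_le_triple_y h n : pairing h (diag_harmonic n) <= 14 * triple_y h.
Proof.
  unfold triple_y. pose proof (L1norm_nonneg (Py h)). pose proof (L1norm_nonneg (Pmy (Pmx h))).
  rewrite <- Px_diag_harmonic, <- pairing_Px, <- Pmy_diag_sine, <- pairing_Pmy.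
  pose proof (pairing_le_L1norm (Pmy (Px h)) (diag_sine n) 14 (Cmod_diag_sine_le n)). lra.
Qed.

Lemma triple_ge_pairing f n : Rbar_le (pairing f (diag_harmonic n) / 14) (triple f).
Proof.
  apply (proj2 (Glb_Rbar_correct _)). intros r [g [h [Hfgh ->]]]. simpl.
  rewrite (pairing_eval_ext f (g ++ h)) by (intros; rewrite tp_eval_app; apply Hfgh).
  rewrite pairing_app. pose proof (pairing_le_triple_x g n). pose proof (pairing_le_triple_y h n).
  lra.
Qed.

Lemma term_mean_diag_pair j l :
  term_mean (term_mul_conj (diag_term j) (diag_term l)) = if Nat.eqb j (l + 0) then 1 else 0.
Proof.
  unfold term_mean, term_mul_conj, diag_term; cbn [fst snd].
  destruct (Z.eqb_spec (Z.of_nat j - Z.of_nat l) 0), (Z.eqb_spec (- Z.of_nat j - - Z.of_nat l) 0),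
    (Nat.eqb_spec j (l + 0)); simpl; try lia; ring.
Qed.

Lemma term_mean_diag_triple j l k :
  term_mean (term_mul_conj (term_mul_conj (diag_term j) (diag_term l)) (diag_harmonic_term k))
  = if Nat.eqb j (l + S k) then / INR (S k) else 0.
Proof.
  unfold term_mean, term_mul_conj, diag_term, diag_harmonic_term; cbn [fst snd].
  destruct (Z.eqb_spec (Z.of_nat j - Z.of_nat l - Z.of_nat (S k)) 0),
    (Z.eqb_spec (- Z.of_nat j - - Z.of_nat l - - Z.of_nat (S k)) 0),
    (Nat.eqb_spec j (l + S k)); simpl; try lia; ring.
Qed.

Lemma tp_mean_diag_fejer n : tp_mean (diag_fejer n) = INR n.
Proof.
  unfold tp_mean, diag_fejer. rewrite lsum_mul_conj, lsum_diag_dirichlet.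
  rewrite <- (Rmult_1_r (INR n)), <- sumn_const. apply sumn_ext; intros j Hj.
  rewrite lsum_diag_dirichlet.
  rewrite (sumn_ext _ _ _ (fun l _ => term_mean_diag_pair j l)), sumn_indicator_eq.
  destruct (Nat.leb_spec 0 j), (Nat.ltb_spec (j - 0) n); simpl; lia || reflexivity.
Qed.

Lemma pairing_diag_fejer_harmonic n :
  pairing (diag_fejer n) (diag_harmonic n) = sumn (fun k => INR (n - S k) / INR (S k)) n.
Proof.
  rewrite pairing_spec. unfold diag_fejer. rewrite lsum_mul_conj, lsum_diag_dirichlet.
  rewrite (sumn_ext _ (fun j => sumn (fun k => sumn (fun l =>
             if Nat.eqb j (l + S k) then / INR (S k) else 0) n) n)).
  2:{ intros j _. rewrite lsum_diag_dirichlet, sumn_swap. apply sumn_ext; intros l _.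
      rewrite lsum_diag_harmonic. apply sumn_ext; intros k _. apply term_mean_diag_triple. }
  rewrite sumn_swap. apply sumn_ext; intros k _.
  rewrite (sumn_ext _ (fun j => if Nat.leb (S k) j then / INR (S k) else 0)).
  - rewrite sumn_indicator_le. reflexivity.
  - intros j Hj. rewrite sumn_indicator_eq.
    destruct (Nat.leb_spec (S k) j), (Nat.ltb_spec (j - S k) n); simpl; lia || reflexivity.
Qed.

Lemma pairing_diag_fejer_harmonic_ge K :
  INR K * harmonic K <= pairing (diag_fejer (K + K)) (diag_harmonic (K + K)).
Proof.
  rewrite pairing_diag_fejer_harmonic, sumn_split. unfold harmonic. rewrite <- sumn_scal.
  assert (Hpos : forall k, 0 < / INR (S k)) by (intros k; apply Rinv_0_lt_compat, lt_0_INR; lia).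
  assert (0 <= sumn (fun i => INR (K + K - S (K + i)) / INR (S (K + i))) K).
  { apply sumn_nonneg. intros i _. unfold Rdiv.
    apply Rmult_le_pos; [apply pos_INR | left; apply Hpos]. }
  assert (sumn (fun k => INR K * / INR (S k)) K
          <= sumn (fun k => INR (K + K - S k) / INR (S k)) K).
  { apply sumn_le. intros k Hk. unfold Rdiv.
    apply Rmult_le_compat_r; [left; apply Hpos | apply le_INR; lia]. }
  lra.
Qed.

Lemma Cmod_real_nonneg z : snd z = 0 -> 0 <= fst z -> Cmod z = fst z.
Proof.
  destruct z as [u v]; simpl; intros -> Hu.
  change (Cmod (RtoC u) = u). rewrite Cmod_R. apply Rabs_right; lra.
Qed.

Lemma tp_mean_app p q : tp_mean (p ++ q) = tp_mean p + tp_mean q.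
Proof. apply lsum_app. Qed.

Lemma tp_mean_PxPy p : tp_mean (Px (Py p)) = tp_mean p.
Proof.
  unfold Px, Py. rewrite filter_filter. apply tp_mean_filter.
  intros [[m n] c] _ E; simpl in E. now injection E as -> ->.
Qed.

Lemma In_diag_dirichlet a n : In a (diag_dirichlet n) -> exists j, a = diag_term j.
Proof. induction n as [|n IH]; simpl; intros H; [contradiction | destruct H; eauto]. Qed.

Lemma PxPy_diag_fejer_terms n t : In t (Px (Py (diag_fejer n))) -> t = ((0, 0)%Z, RtoC 1).
Proof.
  unfold Px, Py, diag_fejer, tp_mul_conj. rewrite !filter_In, in_flat_map.
  intros [[[a [Ha Ht]] Hy] Hx]. apply in_map_iff in Ht. destruct Ht as [b [<- Hb]].
  apply In_diag_dirichlet in Ha, Hb. destruct Ha as [j ->], Hb as [l ->].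
  unfold term_mul_conj, diag_term in *; simpl in *.
  apply Z.leb_le in Hx, Hy. f_equal.
  - f_equal; lia.
  - unfold Cmult, Cconj, RtoC; apply injective_projections; simpl; ring.
Qed.

Lemma tp_eval_unit_terms l x y :
  (forall t, In t l -> t = ((0, 0)%Z, RtoC 1)) -> tp_eval l x y = RtoC (INR (length l)).
Proof.
  induction l as [|t l IH]; intros H; [reflexivity |].
  rewrite tp_eval_cons, IH by (intros; apply H; simpl; auto).
  rewrite (H t (or_introl eq_refl)). simpl length. rewrite S_INR.
  unfold tp_term, cis. rewrite !Rmult_0_l, Rplus_0_r, cos_0, sin_0.
  unfold Cplus, Cmult, RtoC; apply injective_projections; simpl; ring.
Qed.

Lemma tp_eval_PxPy_diag_fejer_real n x y :
  snd (tp_eval (Px (Py (diag_fejer n))) x y) = 0 /\ 0 <= fst (tp_eval (Px (Py (diag_fejer n))) x y).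
Proof.
  rewrite (tp_eval_unit_terms _ x y (PxPy_diag_fejer_terms n)). simpl.
  split; [reflexivity | apply pos_INR].
Qed.

Lemma tp_eval_diag_fejer_real n x y :
  snd (tp_eval (diag_fejer n) x y) = 0 /\ 0 <= fst (tp_eval (diag_fejer n) x y).
Proof.
  unfold diag_fejer. rewrite tp_eval_mul_conj.
  destruct (tp_eval (diag_dirichlet n) x y) as [a b]. simpl. split; [ring | nra].
Qed.

Lemma projections_diag_fejer_le n :
  L1norm (Px (Py (diag_fejer n))) + L1norm (I_minus_PxPy (diag_fejer n)) <= 3 * INR n.
Proof.
  set (f := diag_fejer n). set (b := Px (Py f)). set (a := I_minus_PxPy f).
  assert (Hb : tp_mean b = INR n) by (unfold b; rewrite tp_mean_PxPy; apply tp_mean_diag_fejer).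
  assert (Hsplit : forall x y, tp_eval f x y = Cplus (tp_eval b x y) (tp_eval a x y)).
  { intros x y. unfold a, b, I_minus_PxPy, Px, Py. rewrite filter_filter.
    rewrite (tp_eval_filter_compl (fun t => Z.leb 0 (snd (fst t)) && Z.leb 0 (fst (fst t)))%bool).
    do 2 f_equal. apply filter_ext. intros t. now rewrite Bool.andb_comm. }
  (* |a| = |f - b| <= |f| + |b| = Re f + Re b, as both f and b are real and nonnegative. *)
  assert (Ha : L1norm a <= tp_mean (f ++ b)).
  { apply L1norm_le_mean. intros x y. rewrite tp_eval_app.
    destruct (tp_eval_diag_fejer_real n x y) as [Hf1 Hf2].
    destruct (tp_eval_PxPy_diag_fejer_real n x y) as [Hb1 Hb2]. fold f b in Hf1, Hf2, Hb1, Hb2.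
    replace (tp_eval a x y) with (Cplus (tp_eval f x y) (Copp (tp_eval b x y))) by (rewrite Hsplit; ring).
    eapply Rle_trans; [apply Cmod_triangle |].
    rewrite Cmod_opp, !Cmod_real_nonneg by auto. simpl; lra. }
  rewrite tp_mean_app, Hb in Ha. unfold f in Ha. rewrite tp_mean_diag_fejer in Ha.
  rewrite L1norm_eq_mean by apply tp_eval_PxPy_diag_fejer_real. fold f b. lra.
Qed.

Lemma tp_eval_diag_dirichlet_origin n : tp_eval (diag_dirichlet n) 0 0 = RtoC (INR n).
Proof.
  induction n as [|n IH]; [reflexivity |]. simpl diag_dirichlet.
  rewrite tp_eval_cons, IH. unfold diag_term, tp_term, cis.
  rewrite !Rmult_0_r, Rplus_0_r, cos_0, sin_0, S_INR.
  unfold Cplus, Cmult, RtoC; apply injective_projections; simpl; ring.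
Qed.

Lemma tp_eval_diag_fejer_origin_neq0 n : (1 <= n)%nat -> tp_eval (diag_fejer n) 0 0 <> RtoC 0.
Proof.
  intros Hn E. unfold diag_fejer in E.
  rewrite tp_eval_mul_conj, tp_eval_diag_dirichlet_origin in E.
  apply (f_equal fst) in E. simpl in E.
  assert (0 < INR n) by (apply lt_0_INR; lia). nra.
Qed.

Lemma Rbar_le_mult_finite (a c eps : R) (T : Rbar) :
  0 < eps -> Rbar_le c T -> a <= eps * c -> Rbar_le a (Rbar_mult eps T).
Proof.
  intros Heps HcT Ha. destruct T as [v | |]; simpl in *.
  - nra.
  - unfold Rbar_mult'. destruct (Rle_dec 0 eps) as [H0 | H0]; [| lra].
    destruct (Rle_lt_or_eq_dec 0 eps H0); [exact I | lra].
  - contradiction.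
Qed.

Theorem mainTheorem3 : forall eps : R, 0 < eps ->
  exists f : trigpoly,
    (exists x y, tp_eval f x y <> RtoC 0) /\
    Rbar_le (Finite (L1norm (Px (Py f)) + L1norm (I_minus_PxPy f)))
            (Rbar_mult (Finite eps) (triple f)).
Proof.
  intros eps Heps.
  destruct (INR_unbounded (168 / eps)) as [p Hp].
  set (K := (2 ^ p)%nat). set (n := (K + K)%nat).
  assert (HK : (1 <= K)%nat) by (pose proof (Nat.pow_nonzero 2 p); unfold K; lia).
  exists (diag_fejer n). split; [exists 0, 0; apply tp_eval_diag_fejer_origin_neq0; lia |].
  apply (Rbar_le_mult_finite _ (pairing (diag_fejer n) (diag_harmonic n) / 14));
    [exact Heps | apply triple_ge_pairing |].
  pose proof (projections_diag_fejer_le n) as Hupper.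
  pose proof (pairing_diag_fejer_harmonic_ge K) as Hlower.
  pose proof (harmonic_pow2 p) as Hharm.
  assert (Heps_harm : 84 <= eps * harmonic K).
  { unfold Rdiv in Hp. apply Rmult_gt_compat_l with (r := eps) in Hp; [| lra].
    rewrite <- Rmult_assoc, Rinv_r_simpl_m in Hp by lra. fold K in Hharm. nra. }
  unfold n in *. rewrite plus_INR in Hupper. pose proof (pos_INR K). nra.
Qed.
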